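(* Let $\mathcal{F}$ be a fixed hypergraph on $k$ vertices and let $\mathcal{H}$ be a hypergraph on at least $k$ vertices. Then: (1) $\hat{\mathcal{H}}^{k+1}$ has no edge-induced subhypergraph isomorphic to $\mathcal{F}$; (2) if $\mathcal{F}$ has at least one hyperedge, $\hat{\mathcal{H}}^{k+1}$ has no restriction isomorphic to $\mathcal{F}$; (3) if there exists $\ell\le k$ such that $\mathcal{F}$ has strictly fewer than $\binom{k-1}{\ell-1}$ hyperedges of size $\ell$, then $\hat{\mathcal{H}}_{\ell}$ has no subhypergraph isomorphic to $\mathcal{F}$.
   Context: For a hypergraph $\mathcal{H}=(V,\mathcal{F}_0)$: an edge-induced subhypergraph is $(\bigcup_{F\in\mathcal{F}'}F,\mathcal{F}')$ for $\mathcal{F}'\subseteq\mathcal{F}_0$; a restriction is $(V',\{F\in\mathcal{F}_0\mid F\subseteq V'\})$ for $V'\subseteq V$; a subhypergraph is $(V',\{F\cap V'\mid F\in\mathcal{F}_0,\ F\cap V'\neq\emptyset\})$ for $V'\subseteq V$. $\hat{\mathcal{H}}^{m}=(V\cup\{x_1,\dots,x_m\},\{E\cup\{x_1,\dots,x_m\}\mid E\in\mathcal{F}_0\})$ with new vertices $x_1,\dots,x_m$. $\hat{\mathcal{H}}_{\ell}$ has vertex set $V\cup\{x\}$ with $x$ new and hyperedge set $\mathcal{F}_0\cup\{X\cup\{x\}\mid X\subseteq V,\ |X|=\ell\}$. *)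

From mathcomp Require Import all_boot.
Set Implicit Arguments. Unset Strict Implicit. Unset Printing Implicit Defensive.

Record hypergraph (T : finType) := Hypergraph {
  hverts : {set T};
  hedges : {set {set T}} }.

Definition wf_hypergraph (T : finType) (H : hypergraph T) : Prop :=
  forall e, e \in hedges H -> (e \subset hverts H) /\ e != set0.

Definition hiso (T1 T2 : finType) (H1 : hypergraph T1) (H2 : hypergraph T2) : Prop :=
  exists f : T1 -> T2,
    {in hverts H1 &, injective f} /\
    f @: hverts H1 = hverts H2 /\
    [set f @: e | e : {set T1} in hedges H1] = hedges H2.

Definition edge_induced (T : finType) (Fp : {set {set T}}) : hypergraph T :=
  Hypergraph (\bigcup_(e in Fp) e) Fp.

Definition restriction (T : finType) (H : hypergraph T) (V' : {set T}) : hypergraph T :=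
  Hypergraph V' [set e in hedges H | e \subset V'].

Definition subhypergraph (T : finType) (H : hypergraph T) (V' : {set T}) : hypergraph T :=
  Hypergraph V' [set e :&: V' | e : {set T} in hedges H & e :&: V' != set0].

(* \hat{H}^m : new vertices x_1..x_m (the inr part), added to every hyperedge. *)
Definition hat_up (T : finType) (H : hypergraph T) (m : nat) : hypergraph (T + 'I_m)%type :=
  Hypergraph (inl @: hverts H :|: [set inr i | i : 'I_m])
             [set (inl @: E) :|: [set inr i | i : 'I_m] | E : {set T} in hedges H].

(* \hat{H}_l : one new vertex x (= None), plus all hyperedges X ∪ {x} with
   X ⊆ V, |X| = l. *)
Definition hat_low (T : finType) (H : hypergraph T) (l : nat) : hypergraph (option T) :=
  Hypergraph (Some @: hverts H :|: [set None])
    ([set Some @: E | E : {set T} in hedges H] :|: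
     [set None |: (Some @: X) | X : {set T} in [set X : {set T} | (X \subset hverts H) && (#|X| == l)]]).

Definition n_edges_of_size (T : finType) (H : hypergraph T) (l : nat) : nat :=
  #|[set e in hedges H | #|e| == l]|.

From mathcomp Require Import all_boot.

Set Implicit Arguments.
Unset Strict Implicit.
Unset Printing Implicit Defensive.

(* Every hyperedge of Ĥ^(k+1) contains the k+1 new vertices, so an
   edge-induced subhypergraph or a restriction of it having a hyperedge has
   more than k vertices.  In Ĥ_l, a set V' of k vertices either contains the
   new vertex x, and then x together with any l-1 other vertices of V' is the
   trace on V' of a hyperedge X ∪ {x} (pad X with a vertex of H outside V',
   which exists since |V(H)| >= k), or it avoids x, and then every l-subset
   of V' is such a trace.  Either way some vertex of the subhypergraph on V'
   lies in C(k-1, l-1) hyperedges of size l, and isomorphisms preserve the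
   number of hyperedges of size l. *)

Lemma preimset_imset_in (T1 T2 : finType) (f : T1 -> T2) (V A : {set T1}) :
  {in V &, injective f} -> A \subset V -> V :&: f @^-1: (f @: A) = A.
Proof.
move=> f_inj sAV; apply/setP => x; rewrite !inE.
apply/andP/idP => [[xV /imsetP[y yA fxy]] | xA]; last first.
  by rewrite (subsetP sAV) ?imset_f.
by rewrite (f_inj x y) // (subsetP sAV).
Qed.

Lemma Some_preimsetK (T : finType) (B : {set option T}) :
  None \notin B -> Some @: (Some @^-1: B) = B.
Proof.
move=> NB; apply/setP => -[x|]; first by rewrite mem_imset ?inE //; exact: Some_inj.
by rewrite (negbTE NB); apply/imsetP => -[].
Qed.

Lemma card_Some_preimset (T : finType) (B : {set option T}) :
  #|Some @^-1: B| = #|B :\ None|.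
Proof.
have -> : Some @^-1: B = Some @^-1: (B :\ None) by apply/setP => x; rewrite !inE.
have NB : None \notin B :\ None by rewrite setD11.
by rewrite -{2}(Some_preimsetK NB) card_imset //; exact: Some_inj.
Qed.

Section Isomorphism.

Variables (T1 T2 : finType) (G : hypergraph T1) (F : hypergraph T2).

Lemma hiso_card : hiso G F -> #|hverts G| = #|hverts F|.
Proof. by case=> f [f_inj [<- _]]; rewrite card_in_imset. Qed.

Lemma hiso_edges_eq0 : hiso G F -> (hedges G == set0) = (hedges F == set0).
Proof. by case=> f [_ [_ <-]]; rewrite imset_eq0. Qed.

Lemma hiso_n_edges_of_size l :
  (forall e, e \in hedges G -> e \subset hverts G) -> hiso G F ->
  n_edges_of_size G l = n_edges_of_size F l.
Proof.
rewrite /n_edges_of_size => sub_edges [f [f_inj [_ <-]]].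
have card_f e : e \in hedges G -> #|f @: e| = #|e|.
  by move=> eG; apply: card_in_imset; apply: sub_in2 f_inj; apply/subsetP/sub_edges.
have -> : [set e' in [set f @: e | e : {set T1} in hedges G] | #|e'| == l]
        = [set f @: e | e : {set T1} in [set e in hedges G | #|e| == l]].
  apply/setP => e'; rewrite inE; apply/andP/imsetP => [[/imsetP[e eG ->]] | [e]].
    by rewrite card_f // => cl; exists e; rewrite // inE eG.
  by rewrite inE => /andP[eG cl] ->; rewrite imset_f // card_f.
rewrite card_in_imset // => e1 e2.
rewrite !inE => /andP[/sub_edges s1 _] /andP[/sub_edges s2 _] e12.
by rewrite -(preimset_imset_in f_inj s1) e12 preimset_imset_in.
Qed.

End Isomorphism.

Lemma star_card_le (T : finType) (G : hypergraph T) p l :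
  p \in hverts G -> 0 < l ->
  (forall Y : {set T}, Y \subset hverts G :\ p -> #|Y| = l.-1 -> p |: Y \in hedges G) ->
  'C(#|hverts G|.-1, l.-1) <= n_edges_of_size G l.
Proof.
move=> pG l_gt0 star.
set D := [set Y : {set T} | Y \subset hverts G :\ p & #|Y| == l.-1].
have notin_p Y : Y \in D -> p \notin Y.
  by rewrite inE => /andP[/subsetP sY _]; apply/negP => /sY; rewrite !inE eqxx.
have -> : 'C(#|hverts G|.-1, l.-1) = #|[set p |: Y | Y in D]|.
  rewrite card_in_imset; first by rewrite cards_draws (cardsD1 p) pG.
  by move=> Y1 Y2 /notin_p p1 /notin_p p2 e; rewrite -(setU1K p1) -(setU1K p2) e.
apply/subset_leq_card/subsetP => _ /imsetP[Y YD ->].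
move: (YD) => /notin_p pY; rewrite inE in YD; case/andP: YD => sY /eqP cY.
by rewrite inE star // cardsU1 pY cY add1n prednK ?eqxx.
Qed.

Lemma hat_up_edge_card (T : finType) (H : hypergraph T) m e (V : {set T + 'I_m}) :
  e \in hedges (hat_up H m) -> e \subset V -> m <= #|V|.
Proof.
case/imsetP=> E _ -> /(subset_trans (subsetUr _ _))/subset_leq_card.
by rewrite card_imset ?card_ord //; exact: inr_inj.
Qed.

Section HatLow.

Variables (T : finType) (H : hypergraph T) (l : nat) (V : {set option T}).
Hypothesis sVH : V \subset hverts (hat_low H l).

Let S := subhypergraph (hat_low H l) V.

Lemma hat_low_trace_edge (X : {set T}) :
  X \subset hverts H -> #|X| = l -> (None |: Some @: X) :&: V != set0 ->
  (None |: Some @: X) :&: V \in hedges S.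
Proof.
move=> sXH cX nz; apply/imsetP; exists (None |: Some @: X) => //.
rewrite !inE nz andbT; apply/orP; right.
by apply/imsetP; exists X; rewrite // inE sXH cX eqxx.
Qed.

Lemma Some_preimset_sub : Some @^-1: V \subset hverts H.
Proof.
apply/subsetP => x; rewrite inE => /(subsetP sVH).
by rewrite !inE mem_imset ?orbF //; exact: Some_inj.
Qed.

Lemma hat_low_star_None :
  None \in V -> #|V| <= #|hverts H| -> 0 < l ->
  forall Y : {set option T}, Y \subset V :\ None -> #|Y| = l.-1 -> None |: Y \in hedges S.
Proof.
move=> NV cardV l_gt0 Y sY cY.
have [z zH zV] : exists2 z, z \in hverts H & Some z \notin V.
  suff /subsetPn[z zH] : ~~ (hverts H \subset Some @^-1: V) by rewrite inE; exists z.
  apply/negP => /subset_leq_card; apply/negP; rewrite -ltnNge.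
  by apply: leq_trans cardV; rewrite card_Some_preimset (cardsD1 None V) NV.
have NY : None \notin Y by apply/negP => /(subsetP sY); rewrite !inE eqxx.
have zY : Some z \notin Y.
  by apply: contra zV => /(subsetP sY); rewrite inE => /andP[].
have -> : None |: Y = (None |: Some @: (z |: Some @^-1: Y)) :&: V.
  rewrite imsetU1 Some_preimsetK //; apply/setP => x; rewrite !inE.
  case: eqP => [-> | _] /=; first by rewrite NV.
  case: eqP => [-> | _] /=; first by rewrite (negbTE zV) (negbTE zY) ?andbF.
  by case xY : (x \in Y) => //=; have := subsetP sY x xY; rewrite inE => /andP[].
apply: hat_low_trace_edge.
- rewrite subUset sub1set zH; apply: subset_trans Some_preimset_sub.
  by apply: preimsetS; apply: subset_trans sY (subsetDl _ _).
- rewrite cardsU1 [z \in _]inE zY -(card_imset _ (@Some_inj _)) Some_preimsetK //.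
  by rewrite cY add1n prednK.
- by apply/set0Pn; exists None; rewrite !inE eqxx.
Qed.

Lemma hat_low_edge_None_notin :
  None \notin V -> 0 < l ->
  forall B : {set option T}, B \subset V -> #|B| = l -> B \in hedges S.
Proof.
move=> NV l_gt0 B sBV cB.
have NB : None \notin B by apply: contra NV => /(subsetP sBV).
have traceB : (None |: B) :&: V = B.
  apply/setP => x; rewrite !inE; case: eqP => [-> | _] /=.
    by rewrite (negbTE NB) (negbTE NV).
  by apply/andb_idr => /(subsetP sBV).
have -> : B = (None |: Some @: (Some @^-1: B)) :&: V.
  by rewrite Some_preimsetK // traceB.
apply: hat_low_trace_edge.
- exact: subset_trans (preimsetS _ sBV) Some_preimset_sub.
- by rewrite -(card_imset _ (@Some_inj _)) Some_preimsetK.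
- by rewrite Some_preimsetK // traceB -card_gt0 cB.
Qed.

Lemma hat_low_star :
  0 < #|V| <= #|hverts H| -> 0 < l ->
  exists2 p, p \in V &
    forall Y : {set option T}, Y \subset V :\ p -> #|Y| = l.-1 -> p |: Y \in hedges S.
Proof.
case/andP=> V_gt0 cardV l_gt0; have [NV | NV] := boolP (None \in V).
  by exists None => //; exact: hat_low_star_None.
have /set0Pn[p pV] : V != set0 by rewrite -card_gt0.
exists p => // Y sY cY; have pY : p \notin Y.
  by apply/negP => /(subsetP sY); rewrite !inE eqxx.
apply: hat_low_edge_None_notin => //; last by rewrite cardsU1 pY cY add1n prednK.
by rewrite subUset sub1set pV (subset_trans sY) ?subsetDl.
Qed.

End HatLow.

Theorem lemma7 (TF TH : finType) (F : hypergraph TF) (H : hypergraph TH) (k : nat) :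
  wf_hypergraph F -> wf_hypergraph H ->
  0 < k -> #|hverts F| = k -> k <= #|hverts H| ->
  (* (1) *)
  (~ exists Fp : {set {set (TH + 'I_k.+1)%type}},
       Fp \subset hedges (hat_up H k.+1) /\ hiso (edge_induced Fp) F) /\
  (* (2) *)
  (hedges F != set0 ->
   ~ exists V' : {set (TH + 'I_k.+1)%type},
       V' \subset hverts (hat_up H k.+1) /\ hiso (restriction (hat_up H k.+1) V') F) /\
  (* (3) *)
  (forall l : nat, 1 <= l <= k -> n_edges_of_size F l < 'C(k.-1, l.-1) ->
   ~ exists V' : {set option TH},
       V' \subset hverts (hat_low H l) /\ hiso (subhypergraph (hat_low H l) V') F).
Proof.
move=> _ _ k_gt0 cardF cardH; split; [|split].
- case=> Fp [sFp /hiso_card]; rewrite cardF /=.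
  have [-> | [e eFp]] := set_0Vmem Fp.
    by rewrite big_set0 cards0 => k0; rewrite -k0 in k_gt0.
  move=> cardFp; have := hat_up_edge_card (subsetP sFp e eFp) (bigcup_sup e eFp).
  by rewrite cardFp ltnn.
- move=> F_edges [V' [_ isoR]].
  have /set0Pn[e] : hedges (restriction (hat_up H k.+1) V') != set0.
    by rewrite (hiso_edges_eq0 isoR).
  rewrite inE => /andP[e_hat eV']; have := hat_up_edge_card e_hat eV'.
  by rewrite (hiso_card isoR) cardF ltnn.
- move=> l /andP[l_gt0 _] few [V' [sV' isoS]].
  have cardV : #|V'| = k by rewrite -cardF (hiso_card isoS).
  have [|p pV star] := hat_low_star sV' _ l_gt0; first by rewrite cardV k_gt0.
  have edges_sub e : e \in hedges (subhypergraph (hat_low H l) V') -> e \subset V'.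
    by case/imsetP=> e0 _ ->; exact: subsetIr.
  have := star_card_le (G := subhypergraph (hat_low H l) V') pV l_gt0 star.
  by rewrite (hiso_n_edges_of_size l edges_sub isoS) /= cardV leqNgt few.
Qed.
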